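(* Assume (A2). Then for every $n\ge0$ and all $(x,t)\in K_{R^*,T^*}$, $\phi_{n+1}(x,t)\ge\phi_n(x,t)\ge0$ and $\psi_{n+1}(x,t)\ge\psi_n(x,t)\ge0$.
   Context: Let $p>1$ and $\mu>0$ with $p<1+2/\mu$, and let $R^*,T^*>0$. Write $B_R=\{x\in\mathbb{R}:|x|<R\}$. Fix constants $\gamma_1,\gamma_2>0$ with $\gamma_1+\gamma_2>\max\big(1,(\mu p 2^p)^{1/(p-1)}\big)$ (standing assumption). Let $f,g$ be real functions on $\mathbb{R}$. Assumption (A2): $f\ge\gamma_1$ and $g\ge\gamma_2$ on $B_{R^*+T^*}$. Let $K_{R^*,T^*}=\{(x,t):t>0,\ |x-x_0|<T^*-t\ \text{for some } x_0\in B_{R^*}\}$. Define iterates $\phi_0\equiv\gamma_1$, $\psi_0\equiv\gamma_2$ and, with $\mathcal{N}_n(x,s)=2^{-p}|\phi_n+\psi_n|^p(x,s)-\frac{\mu}{1+s}\frac{(\phi_n+\psi_n)(x,s)}{2}$, $\phi_{n+1}(x,t)=f(x+t)+\int_0^t\mathcal{N}_n(x+t-s,s)\,ds$, $\psi_{n+1}(x,t)=g(x-t)+\int_0^t\mathcal{N}_n(x-t+s,s)\,ds$. *)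

From Stdlib Require Import Reals.
From Coquelicot Require Import Coquelicot.
Open Scope R_scope.

(* |a|^q for real exponent q > 0, with the convention 0^q = 0
   (Stdlib's Rpower 0 q = 1, so we guard the zero case). *)
Definition abspow (a q : R) : R :=
  if Req_EM_T a 0 then 0 else Rpower (Rabs a) q.

Definition Nl (p mu : R) (phi psi : R -> R -> R) (x s : R) : R :=
  abspow (phi x s + psi x s) p / Rpower 2 p
  - mu / (1 + s) * ((phi x s + psi x s) / 2).

Fixpoint iterates (p mu g1 g2 : R) (f g : R -> R) (n : nat)
  : (R -> R -> R) * (R -> R -> R) :=
  match n with
  | O => (fun _ _ => g1, fun _ _ => g2)
  | S m =>
      let '(phi, psi) := iterates p mu g1 g2 f g m in
      (fun x t => f (x + t) + RInt (fun s => Nl p mu phi psi (x + t - s) s) 0 t,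
       fun x t => g (x - t) + RInt (fun s => Nl p mu phi psi (x - t + s) s) 0 t)
  end.

Definition phi_n p mu g1 g2 f g n := fst (iterates p mu g1 g2 f g n).
Definition psi_n p mu g1 g2 f g n := snd (iterates p mu g1 g2 f g n).

Definition K_dom (Rs Ts x t : R) : Prop :=
  0 < t /\ exists x0, Rabs x0 < Rs /\ Rabs (x - x0) < Ts - t.

(* With w = phi + psi the nonlinearity is N(s, w) = w^p / 2^p - mu w / (2 (1 + s)).
   For c = g1 + g2 we have c^(p-1) > mu p 2^p, so for s >= 0 the map N(s, .) is
   nonnegative at c and, by the mean value theorem for w^p, nondecreasing on [c, oo).
   Induction on n then gives g1 <= phi_n <= phi_(n+1) and g2 <= psi_n <= psi_(n+1) on the
   backward cone: the base case combines (A2) with N(s, c) >= 0, and the step integrates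
   N_n <= N_(n+1) along the characteristics, which stay in the cone.  Since the integrals are
   Riemann integrals, one also shows by induction that every iterate is jointly continuous
   on s > -1, through the continuity of parametric integrals. *)

From Stdlib Require Import Reals Lra.
From Coquelicot Require Import Coquelicot.
Open Scope R_scope.

Lemma Rabs_minus_diag_lt (x : R) (d : posreal) : Rabs (x - x) < d.
Proof. rewrite Rminus_eq_0, Rabs_R0. apply cond_pos. Qed.

Lemma continuous_of_continuity_2d_pt (K : R -> R -> R) (a s : R) :
  continuity_2d_pt K a s -> continuous (K a) s.
Proof.
  intros HK. apply filterlim_locally. intros eps.
  destruct (HK eps) as [d Hd]. exists d. intros y Hy.
  apply Hd; [apply Rabs_minus_diag_lt | exact Hy].
Qed.

Lemma ex_RInt_of_continuity_2d_pt (K : R -> R -> R) (a b1 b2 : R) :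
  (forall s, Rmin b1 b2 <= s <= Rmax b1 b2 -> continuity_2d_pt K a s) ->
  ex_RInt (K a) b1 b2.
Proof.
  intros HK. apply (@ex_RInt_continuous R_CompleteNormedModule).
  intros s Hs. apply continuous_of_continuity_2d_pt, HK, Hs.
Qed.

Lemma continuity_2d_pt_shear (F : R -> R -> R) (c a s : R) :
  continuity_2d_pt F (a + c * s) s ->
  continuity_2d_pt (fun a s => F (a + c * s) s) a s.
Proof.
  intros HF eps. destruct (HF eps) as [d Hd].
  assert (Hc : 0 < 1 + Rabs c) by (pose proof (Rabs_pos c); lra).
  assert (Hdc : 0 < d / (1 + Rabs c)) by (apply Rdiv_lt_0_compat; [apply cond_pos | exact Hc]).
  exists (mkposreal _ Hdc). simpl. intros u v Hu Hv. apply Hd.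
  - replace (u + c * v - (a + c * s)) with ((u - a) + c * (v - s)) by ring.
    eapply Rle_lt_trans; [apply Rabs_triang|]. rewrite Rabs_mult.
    replace (pos d) with (d / (1 + Rabs c) + Rabs c * (d / (1 + Rabs c))) by (field; lra).
    apply Rplus_lt_le_compat; [exact Hu|].
    apply Rmult_le_compat_l; [apply Rabs_pos | lra].
  - apply (Rlt_le_trans _ _ _ Hv). apply Rmult_le_reg_r with (1 + Rabs c); [exact Hc|].
    unfold Rdiv. rewrite Rmult_assoc, Rinv_l by lra. pose proof (cond_pos d).
    pose proof (Rabs_pos c). nra.
Qed.

Lemma continuous_RInt_param (K : R -> R -> R) (b1 b2 a0 : R) :
  (forall a s, Rmin b1 b2 <= s <= Rmax b1 b2 -> continuity_2d_pt K a s) ->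
  continuous (fun a => RInt (K a) b1 b2) a0.
Proof.
  intros HK. apply filterlim_locally. intros eps.
  set (l := Rabs (b2 - b1)).
  assert (Hl : 0 <= l) by apply Rabs_pos.
  assert (Heta : 0 < eps / (l + 1)) by (apply Rdiv_lt_0_compat; [apply cond_pos | lra]).
  destruct (uniform_continuity_2d K (a0 - 1) (a0 + 1) (Rmin b1 b2) (Rmax b1 b2)
    (fun a s _ Hs => HK a s Hs) (mkposreal _ Heta)) as [d Hd].
  assert (Hd1 : 0 < Rmin 1 d) by (apply Rmin_pos; [lra | apply cond_pos]).
  exists (mkposreal _ Hd1). intros a Ha. change (Rabs (a - a0) < Rmin 1 d) in Ha.
  pose proof (Rmin_l 1 d). pose proof (Rmin_r 1 d).
  change (Rabs (RInt (K a) b1 b2 - RInt (K a0) b1 b2) < eps).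
  replace (RInt (K a) b1 b2 - RInt (K a0) b1 b2) with (RInt (fun s => K a s - K a0 s) b1 b2)
    by (apply (RInt_minus (K a) (K a0)); apply ex_RInt_of_continuity_2d_pt; auto).
  eapply Rle_lt_trans.
  - apply (norm_RInt_le_const_abs (fun s => K a s - K a0 s) b1 b2 _ (eps / (l + 1))).
    + intros s Hs. left. apply (Hd a0 s a s); try lra.
      * apply Rabs_le_between'. lra.
      * apply Rabs_minus_diag_lt.
    + apply (@RInt_correct R_CompleteNormedModule), (@ex_RInt_minus R_NormedModule);
        apply ex_RInt_of_continuity_2d_pt; auto.
  - fold l. apply Rmult_lt_reg_r with (l + 1); [lra|].
    replace (l * (eps / (l + 1)) * (l + 1)) with (l * eps) by (field; lra).
    pose proof (cond_pos eps). nra.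
Qed.

Lemma continuity_2d_pt_RInt_from (K : R -> R -> R) (a0 t0 : R) :
  locally_2d (fun a s => continuity_2d_pt K a s) a0 t0 ->
  continuity_2d_pt (fun a t => RInt (K a) t0 t) a0 t0.
Proof.
  intros [d1 HK] eps.
  destruct (HK a0 t0 (Rabs_minus_diag_lt a0 d1) (Rabs_minus_diag_lt t0 d1) (mkposreal 1 Rlt_0_1))
    as [d2 Hd2].
  set (B := Rabs (K a0 t0) + 1).
  assert (HB : 0 < B) by (unfold B; pose proof (Rabs_pos (K a0 t0)); lra).
  assert (Hd : 0 < Rmin (Rmin d1 d2) (eps / B)).
  { repeat apply Rmin_pos; try apply cond_pos.
    apply Rdiv_lt_0_compat; [apply cond_pos | exact HB]. }
  exists (mkposreal _ Hd). simpl. intros a t Ha Ht.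
  pose proof (Rmin_l (Rmin d1 d2) (eps / B)) as Hdd12.
  pose proof (Rmin_r (Rmin d1 d2) (eps / B)) as HdB.
  pose proof (Rmin_l d1 d2) as Hdd1. pose proof (Rmin_r d1 d2) as Hdd2.
  assert (Hnear : forall s, Rmin t0 t <= s <= Rmax t0 t -> Rabs (s - t0) <= Rabs (t - t0)).
  { intros s Hs. destruct (Rle_dec t0 t);
      [rewrite Rmin_left, Rmax_right in Hs | rewrite Rmin_right, Rmax_left in Hs];
      try lra; split_Rabs; lra. }
  rewrite RInt_point, Rminus_0_r.
  eapply Rle_lt_trans.
  - apply (norm_RInt_le_const_abs (K a) t0 t _ B).
    + intros s Hs. specialize (Hnear s Hs).
      assert (Hclose := Hd2 a s ltac:(lra) ltac:(lra)). simpl in Hclose.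
      change (norm (K a s)) with (Rabs (K a s)).
      replace (K a s) with (K a0 t0 + (K a s - K a0 t0)) by ring.
      unfold B. eapply Rle_trans; [apply Rabs_triang | lra].
    + apply (@RInt_correct R_CompleteNormedModule), ex_RInt_of_continuity_2d_pt.
      intros s Hs. apply HK; specialize (Hnear s Hs); lra.
  - apply Rlt_le_trans with (eps / B * B); [apply Rmult_lt_compat_r; lra | right; field; lra].
Qed.

Lemma continuity_2d_pt_RInt_param (K : R -> R -> R) (L a0 t0 : R) :
  L < 0 -> L < t0 -> (forall a s, L < s -> continuity_2d_pt K a s) ->
  continuity_2d_pt (fun a t => RInt (K a) 0 t) a0 t0.
Proof.
  intros HL0 HLt0 HK.
  assert (Hint : forall a b1 b2, L < b1 -> L < b2 -> ex_RInt (K a) b1 b2).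
  { intros a b1 b2 H1 H2. apply ex_RInt_of_continuity_2d_pt. intros s Hs. apply HK.
    apply Rlt_le_trans with (Rmin b1 b2); [apply Rmin_glb_lt|]; tauto. }
  assert (Hd : 0 < t0 - L) by lra.
  apply continuity_2d_pt_ext_loc with (fun a t => RInt (K a) 0 t0 + RInt (K a) t0 t).
  - exists (mkposreal _ Hd). simpl. intros a t _ Ht.
    apply (RInt_Chasles (K a)); apply Hint; split_Rabs; lra.
  - apply continuity_2d_pt_plus.
    + apply (continuity_1d_2d_pt_comp (fun a => RInt (K a) 0 t0) (fun a _ => a)).
      * apply continuity_pt_filterlim, continuous_RInt_param. intros a s Hs. apply HK.
        apply Rlt_le_trans with (Rmin 0 t0); [apply Rmin_glb_lt|]; tauto.
      * apply continuity_2d_pt_id1.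
    + apply continuity_2d_pt_RInt_from. exists (mkposreal _ Hd). simpl. intros a s _ Hs.
      apply HK. split_Rabs; lra.
Qed.

Lemma continuity_pt_abspow (q u : R) : 0 < q -> continuity_pt (fun a => abspow a q) u.
Proof.
  intros Hq. destruct (Req_EM_T u 0) as [-> | Hu].
  - apply continuity_pt_filterlim, filterlim_locally. intros eps.
    assert (Hd : 0 < Rpower eps (/ q)) by apply exp_pos.
    exists (mkposreal _ Hd). intros y Hy. change (Rabs (y - 0) < Rpower eps (/ q)) in Hy.
    change (Rabs (abspow y q - abspow 0 q) < eps). rewrite Rminus_0_r in Hy.
    unfold abspow. destruct (Req_EM_T 0 0) as [_ | ]; [| congruence].
    destruct (Req_EM_T y 0) as [_ | Hy0].
    + rewrite Rminus_0_r, Rabs_R0. apply cond_pos.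
    + rewrite Rminus_0_r, Rabs_pos_eq by (left; apply exp_pos).
      replace (pos eps) with (Rpower (Rpower eps (/ q)) q)
        by (rewrite Rpower_mult, Rinv_l by lra; apply Rpower_1, cond_pos).
      apply Rlt_Rpower_l; [exact Hq|]. split; [apply Rabs_pos_lt, Hy0 | exact Hy].
  - assert (Hu' : 0 < Rabs u) by (apply Rabs_pos_lt, Hu).
    apply continuity_pt_ext_loc with (fun a => Rpower (Rabs a) q).
    + exists (mkposreal _ Hu'). intros y Hy. change (Rabs (y - u) < Rabs u) in Hy.
      unfold abspow. destruct (Req_EM_T y 0) as [-> | ]; [|reflexivity].
      rewrite Rminus_0_l, Rabs_Ropp in Hy. lra.
    + apply continuity_pt_comp with (f1 := Rabs) (f2 := fun a => Rpower a q).
      * apply Rcontinuity_abs.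
      * apply derivable_continuous_pt. exists (q * Rpower (Rabs u) (q - 1)).
        apply derivable_pt_lim_power, Hu'.
Qed.

Lemma Rpower_lt_of_root_lt (X q c : R) :
  0 < q -> 0 < X -> Rpower X (1 / q) < c -> X < Rpower c q.
Proof.
  intros Hq HX H.
  replace X with (Rpower (Rpower X (1 / q)) q) at 1
    by (rewrite Rpower_mult; replace (1 / q * q) with 1 by (field; lra); apply Rpower_1, HX).
  apply Rlt_Rpower_l; [exact Hq|]. split; [apply exp_pos | exact H].
Qed.

Lemma Rpower_sub_ge (p c v u : R) :
  1 <= p -> 0 < c <= v -> v <= u -> p * Rpower c (p - 1) * (u - v) <= Rpower u p - Rpower v p.
Proof.
  intros Hp Hcv [Hvu | <-]; [| lra].
  destruct (MVT_cor2 (fun x => Rpower x p) (fun x => p * Rpower x (p - 1)) v u Hvu)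
    as [xi [-> Hxi]].
  { intros x Hx. apply derivable_pt_lim_power. lra. }
  apply Rmult_le_compat_r; [lra|]. apply Rmult_le_compat_l; [lra|].
  apply Rle_Rpower_l; lra.
Qed.

Definition nonlin (p mu s w : R) : R := abspow w p / Rpower 2 p - mu / (1 + s) * (w / 2).

Lemma abspow_pos (w q : R) : 0 < w -> abspow w q = Rpower w q.
Proof.
  intros Hw. unfold abspow. destruct (Req_EM_T w 0); [lra|]. rewrite Rabs_pos_eq; lra.
Qed.

Section Nonlinearity.

Variables p mu c : R.
Hypotheses (Hp : 1 < p) (Hmu : 0 < mu) (Hc : 0 < c).
Hypothesis Hthreshold : mu * p * Rpower 2 p < Rpower c (p - 1).

Lemma damping_le_threshold (s : R) : 0 <= s -> mu / (1 + s) / 2 <= Rpower c (p - 1) / Rpower 2 p.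
Proof.
  intros Hs. assert (H2p : 0 < Rpower 2 p) by apply exp_pos.
  apply Rle_trans with (mu * p).
  - unfold Rdiv. rewrite Rmult_assoc. apply Rmult_le_compat_l; [lra|].
    assert (/ (1 + s) <= 1) by (rewrite <- Rinv_1; apply Rinv_le_contravar; lra).
    assert (0 < / (1 + s)) by (apply Rinv_0_lt_compat; lra). nra.
  - apply Rmult_le_reg_r with (Rpower 2 p); [exact H2p|].
    replace (Rpower c (p - 1) / Rpower 2 p * Rpower 2 p) with (Rpower c (p - 1)) by (field; lra).
    lra.
Qed.

Lemma nonlin_threshold_ge0 (s : R) : 0 <= s -> 0 <= nonlin p mu s c.
Proof.
  intros Hs. unfold nonlin. rewrite abspow_pos by exact Hc.
  replace (Rpower c p) with (c * Rpower c (p - 1))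
    by (rewrite <- (Rpower_1 c Hc) at 1; rewrite <- Rpower_plus; f_equal; ring).
  pose proof (damping_le_threshold s Hs).
  replace (c * Rpower c (p - 1) / Rpower 2 p) with (c * (Rpower c (p - 1) / Rpower 2 p))
    by (unfold Rdiv; ring).
  replace (mu / (1 + s) * (c / 2)) with (c * (mu / (1 + s) / 2)) by (unfold Rdiv; ring).
  nra.
Qed.

Lemma nonlin_le (s v u : R) : 0 <= s -> c <= v -> v <= u -> nonlin p mu s v <= nonlin p mu s u.
Proof.
  intros Hs Hcv Hvu. unfold nonlin. rewrite !abspow_pos by lra.
  assert (H2p : 0 < Rpower 2 p) by apply exp_pos.
  assert (Hcp : 0 < Rpower c (p - 1)) by apply exp_pos.
  pose proof (Rpower_sub_ge p c v u ltac:(lra) ltac:(lra) Hvu) as Hmvt.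
  pose proof (damping_le_threshold s Hs) as Hdamp.
  assert (Hgrowth : Rpower c (p - 1) / Rpower 2 p * (u - v)
                    <= (Rpower u p - Rpower v p) / Rpower 2 p).
  { replace (Rpower c (p - 1) / Rpower 2 p * (u - v))
      with (Rpower c (p - 1) * (u - v) / Rpower 2 p) by (field; lra).
    unfold Rdiv. apply Rmult_le_compat_r; [left; apply Rinv_0_lt_compat, H2p|].
    assert (0 <= Rpower c (p - 1) * (u - v)) by (apply Rmult_le_pos; lra). nra. }
  assert (Hdamping : mu / (1 + s) / 2 * (u - v) <= Rpower c (p - 1) / Rpower 2 p * (u - v))
    by (apply Rmult_le_compat_r; lra).
  unfold Rdiv in *. lra.
Qed.

End Nonlinearity.

(* Continuity is tracked on the half-plane [s > -1]: there [1 + s] stays nonzero, and the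
   parametric integrals get a neighbourhood of [s = 0]. *)
Lemma continuity_2d_pt_Nl (p mu : R) (phi psi : R -> R -> R) (y s : R) :
  0 < p -> -1 < s -> continuity_2d_pt phi y s -> continuity_2d_pt psi y s ->
  continuity_2d_pt (Nl p mu phi psi) y s.
Proof.
  intros Hp Hs Hphi Hpsi.
  assert (Hsum : continuity_2d_pt (fun y s => phi y s + psi y s) y s)
    by (apply continuity_2d_pt_plus; assumption).
  apply continuity_2d_pt_minus; apply continuity_2d_pt_mult.
  - apply (continuity_1d_2d_pt_comp (fun a => abspow a p));
      [apply continuity_pt_abspow, Hp | exact Hsum].
  - apply continuity_2d_pt_const.
  - apply continuity_2d_pt_mult; [apply continuity_2d_pt_const|].
    apply continuity_2d_pt_inv; [|lra].
    apply continuity_2d_pt_plus; [apply continuity_2d_pt_const | apply continuity_2d_pt_id2].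
  - apply continuity_2d_pt_mult; [exact Hsum | apply continuity_2d_pt_const].
Qed.

Lemma continuity_2d_pt_characteristic (h : R -> R) (F : R -> R -> R) (c x t : R) :
  continuous h (x + c * t) -> (forall y s, -1 < s -> continuity_2d_pt F y s) -> -1 < t ->
  continuity_2d_pt (fun x t => h (x + c * t) + RInt (fun s => F (x + c * t + - c * s) s) 0 t) x t.
Proof.
  intros Hh HF Ht. apply continuity_2d_pt_plus.
  - apply (continuity_1d_2d_pt_comp h (fun x t => x + c * t)).
    + apply continuity_pt_filterlim, Hh.
    + apply continuity_2d_pt_plus; [apply continuity_2d_pt_id1|].
      apply continuity_2d_pt_mult; [apply continuity_2d_pt_const | apply continuity_2d_pt_id2].
  - apply (continuity_2d_pt_shear (fun a t => RInt (fun s => F (a + - c * s) s) 0 t)).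
    apply (continuity_2d_pt_RInt_param (fun a s => F (a + - c * s) s) (-1)); try lra.
    intros a s Hs. apply continuity_2d_pt_shear, HF, Hs.
Qed.

Lemma ex_RInt_characteristic (K : R -> R -> R) (a c t : R) :
  (forall y s, -1 < s -> continuity_2d_pt K y s) -> 0 <= t ->
  ex_RInt (fun s => K (a + c * s) s) 0 t.
Proof.
  intros HK Ht. apply (@ex_RInt_continuous R_CompleteNormedModule). intros s Hs.
  rewrite Rmin_left in Hs by exact Ht.
  apply (continuous_of_continuity_2d_pt (fun a s => K (a + c * s) s)).
  apply continuity_2d_pt_shear, HK. lra.
Qed.

(* Closed at [t = 0], unlike [K_dom], because the characteristic integrals reach [s = 0]. *)
Definition cone (Rs Ts x t : R) : Prop :=
  0 <= t /\ exists x0, Rabs x0 < Rs /\ Rabs (x - x0) < Ts - t.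

Lemma cone_shrink (Rs Ts x t y s : R) :
  cone Rs Ts x t -> 0 <= s -> Rabs (y - x) <= t - s -> cone Rs Ts y s.
Proof.
  intros [_ [x0 [Hx0 Hxx0]]] Hs Hyx. split; [exact Hs|]. exists x0. split; [exact Hx0|].
  replace (y - x0) with ((y - x) + (x - x0)) by ring.
  eapply Rle_lt_trans; [apply Rabs_triang | lra].
Qed.

Lemma cone_in_ball (Rs Ts x t y : R) :
  cone Rs Ts x t -> Rabs (y - x) <= t -> Rabs y < Rs + Ts.
Proof.
  intros [_ [x0 [Hx0 Hxx0]]] Hyx.
  replace y with ((y - x) + (x - x0) + x0) by ring.
  eapply Rle_lt_trans; [apply Rabs_triang|].
  pose proof (Rabs_triang (y - x) (x - x0)). lra.
Qed.

Section Iterates.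

Variables (p mu g1 g2 Rs Ts : R) (f g : R -> R).

Local Notation phi := (phi_n p mu g1 g2 f g).
Local Notation psi := (psi_n p mu g1 g2 f g).
Local Notation N n := (Nl p mu (phi n) (psi n)).

Lemma phi_n_S (n : nat) (x t : R) :
  phi (S n) x t = f (x + t) + RInt (fun s => N n (x + t - s) s) 0 t.
Proof. unfold phi_n, psi_n; simpl. destruct (iterates p mu g1 g2 f g n); reflexivity. Qed.

Lemma psi_n_S (n : nat) (x t : R) :
  psi (S n) x t = g (x - t) + RInt (fun s => N n (x - t + s) s) 0 t.
Proof. unfold phi_n, psi_n; simpl. destruct (iterates p mu g1 g2 f g n); reflexivity. Qed.

Hypotheses (Hp : 1 < p) (Hmu : 0 < mu) (Hg1 : 0 < g1) (Hg2 : 0 < g2).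
Hypothesis Hthreshold : mu * p * Rpower 2 p < Rpower (g1 + g2) (p - 1).
Hypotheses (Hfc : forall y, continuous f y) (Hgc : forall y, continuous g y).
Hypotheses (Hf : forall y, Rabs y < Rs + Ts -> g1 <= f y)
           (Hg : forall y, Rabs y < Rs + Ts -> g2 <= g y).

Lemma continuity_2d_pt_iterates (n : nat) (y s : R) :
  -1 < s -> continuity_2d_pt (phi n) y s /\ continuity_2d_pt (psi n) y s.
Proof.
  revert y s. induction n as [|n IH]; intros y s Hs.
  { unfold phi_n, psi_n; simpl. split; apply continuity_2d_pt_const. }
  assert (HN : forall y s, -1 < s -> continuity_2d_pt (N n) y s).
  { intros y' s' Hs'. destruct (IH y' s' Hs'). apply continuity_2d_pt_Nl; auto; lra. }
  split.
  - apply continuity_2d_pt_ext with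
      (fun x t => f (x + 1 * t) + RInt (fun s => N n (x + 1 * t + - (1) * s) s) 0 t).
    + intros x t. rewrite phi_n_S, Rmult_1_l. f_equal. apply RInt_ext. intros. f_equal. ring.
    + apply continuity_2d_pt_characteristic; auto.
  - apply continuity_2d_pt_ext with
      (fun x t => g (x + -1 * t) + RInt (fun s => N n (x + -1 * t + - (-1) * s) s) 0 t).
    + intros x t. rewrite psi_n_S. f_equal; [f_equal; ring|].
      apply RInt_ext. intros. f_equal. ring.
    + apply continuity_2d_pt_characteristic; auto.
Qed.

Lemma ex_RInt_N_forward (n : nat) (x t : R) :
  0 <= t -> ex_RInt (fun s => N n (x + t - s) s) 0 t.
Proof.
  intros Ht. apply (ex_RInt_ext (fun s => N n ((x + t) + -1 * s) s)).
  { intros s _. f_equal. ring. }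
  apply ex_RInt_characteristic; [|exact Ht]. intros y s Hs.
  destruct (continuity_2d_pt_iterates n y s Hs). apply continuity_2d_pt_Nl; auto; lra.
Qed.

Lemma ex_RInt_N_backward (n : nat) (x t : R) :
  0 <= t -> ex_RInt (fun s => N n (x - t + s) s) 0 t.
Proof.
  intros Ht. apply (ex_RInt_ext (fun s => N n ((x - t) + 1 * s) s)).
  { intros s _. f_equal. ring. }
  apply ex_RInt_characteristic; [|exact Ht]. intros y s Hs.
  destruct (continuity_2d_pt_iterates n y s Hs). apply continuity_2d_pt_Nl; auto; lra.
Qed.

Lemma iterates_monotone (n : nat) (x t : R) :
  cone Rs Ts x t ->
  (g1 <= phi n x t <= phi (S n) x t) /\ (g2 <= psi n x t <= psi (S n) x t).
Proof.
  assert (HN0 : forall y s, 0 <= s -> 0 <= N 0 y s)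
    by (intros y s Hs; apply (nonlin_threshold_ge0 p mu (g1 + g2)); auto; lra).
  revert x t. induction n as [|n IH]; intros x t Hxt; pose proof (proj1 Hxt) as Ht.
  - assert (g1 <= f (x + t)) by (apply Hf, (cone_in_ball _ _ x t); auto; split_Rabs; lra).
    assert (g2 <= g (x - t)) by (apply Hg, (cone_in_ball _ _ x t); auto; split_Rabs; lra).
    assert (0 <= RInt (fun s => N 0 (x + t - s) s) 0 t)
      by (apply RInt_ge_0; [exact Ht | apply ex_RInt_N_forward, Ht | intros; apply HN0; lra]).
    assert (0 <= RInt (fun s => N 0 (x - t + s) s) 0 t)
      by (apply RInt_ge_0; [exact Ht | apply ex_RInt_N_backward, Ht | intros; apply HN0; lra]).
    rewrite phi_n_S, psi_n_S. change (phi 0 x t) with g1. change (psi 0 x t) with g2. lra.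
  - assert (HNmono : forall y s, cone Rs Ts y s -> N n y s <= N (S n) y s).
    { intros y s Hys. destruct (IH y s Hys) as [Hphi Hpsi].
      apply (nonlin_le p mu (g1 + g2)); auto; try lra. apply Hys. }
    destruct (IH x t Hxt) as [Hphi Hpsi].
    rewrite (phi_n_S (S n)), (psi_n_S (S n)).
    rewrite (phi_n_S n) in Hphi |- *. rewrite (psi_n_S n) in Hpsi |- *.
    assert (Hforward : RInt (fun s => N n (x + t - s) s) 0 t
                      <= RInt (fun s => N (S n) (x + t - s) s) 0 t).
    { apply RInt_le; auto using ex_RInt_N_forward.
      intros s Hs. apply HNmono, (cone_shrink _ _ x t); [exact Hxt | lra | split_Rabs; lra]. }
    assert (Hbackward : RInt (fun s => N n (x - t + s) s) 0 t
                      <= RInt (fun s => N (S n) (x - t + s) s) 0 t).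
    { apply RInt_le; auto using ex_RInt_N_backward.
      intros s Hs. apply HNmono, (cone_shrink _ _ x t); [exact Hxt | lra | split_Rabs; lra]. }
    lra.
Qed.

End Iterates.

Theorem lemma4p1 (p mu Rs Ts g1 g2 : R) (f g : R -> R)
  (hp : 1 < p) (hmu : 0 < mu) (hpmu : p < 1 + 2 / mu)
  (hRs : 0 < Rs) (hTs : 0 < Ts)
  (hg1 : 0 < g1) (hg2 : 0 < g2)
  (hgam1 : 1 < g1 + g2)
  (hgam2 : Rpower (mu * p * Rpower 2 p) (1 / (p - 1)) < g1 + g2)
  (hfc : forall y, continuous f y) (hgc : forall y, continuous g y)
  (hA2f : forall y, Rabs y < Rs + Ts -> g1 <= f y)
  (hA2g : forall y, Rabs y < Rs + Ts -> g2 <= g y) :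
  forall (n : nat) (x t : R), K_dom Rs Ts x t ->
    phi_n p mu g1 g2 f g (S n) x t >= phi_n p mu g1 g2 f g n x t /\
    phi_n p mu g1 g2 f g n x t >= 0 /\
    psi_n p mu g1 g2 f g (S n) x t >= psi_n p mu g1 g2 f g n x t /\
    psi_n p mu g1 g2 f g n x t >= 0.
Proof.
  intros n x t [Ht Hx].
  assert (Hthreshold : mu * p * Rpower 2 p < Rpower (g1 + g2) (p - 1)).
  { apply Rpower_lt_of_root_lt; [lra | | exact hgam2].
    apply Rmult_lt_0_compat; [apply Rmult_lt_0_compat; lra | apply exp_pos]. }
  destruct (iterates_monotone p mu g1 g2 Rs Ts f g hp hmu hg1 hg2 Hthreshold hfc hgc hA2f hA2g
              n x t (conj (Rlt_le _ _ Ht) Hx)) as [Hphi Hpsi].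
  lra.
Qed.
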